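(* Let $X,Y\in\mathcal L^2$. Then $(X,Y)\in\mathrm{IC}_0$ if and only if $(X,Y)$ is quasi-independent.
   Context: All random variables live on an atomless probability space. $\mathcal L^2$ denotes the set of non-degenerate real random variables with finite variance. A function $g:\mathbb R\to\mathbb R$ is admissible for $(X,Y)$ if it is measurable and $g(X),g(Y)\in\mathcal L^2$. For $r\in[-1,1]$, $(X,Y)\in\mathrm{IC}_r$ ($(X,Y)$ has invariant correlation $r$) means $X,Y\in\mathcal L^2$ and $\mathrm{Corr}(X,Y)=\mathrm{Corr}(g(X),g(Y))=r$ for all admissible $g$. A random vector $(X,Y)$ with joint distribution function $H$ and marginal distribution functions $F$ (of $X$) and $G$ (of $Y$) is quasi-independent if $\frac{H(x,y)+H(y,x)}{2}=\frac12F(x)G(y)+\frac12F(y)G(x)$ for all $x,y\in\mathbb R$. *)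

From HB Require Import structures.
From mathcomp Require Import all_boot all_order all_algebra.
From mathcomp Require Import all_classical all_reals all_analysis.
Set Implicit Arguments. Unset Strict Implicit. Unset Printing Implicit Defensive.
Import Order.TTheory GRing.Theory Num.Theory.
Local Open Scope classical_set_scope.
Local Open Scope ring_scope.

Section defs.
Context {d : measure_display} {T : measurableType d} {R : realType}
  (P : probability T R).

Definition atomless : Prop :=
  forall A : set T, measurable A -> (0 < P A)%E ->
    exists B : set T, [/\ measurable B, B `<=` A, (0 < P B)%E & (P B < P A)%E].

Definition nondegenerate (X : T -> R) : Prop :=
  ~ (exists c : R, P [set t | X t = c] = 1%E).

(* membership in \mathcal L^2: non-degenerate with finite variance
   (i.e. measurable and square integrable) *)
Definition inL2 (X : T -> R) : Prop :=
  X \in Lfun P 2%:E /\ nondegenerate X.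

Definition corr (X Y : T -> R) : R :=
  fine (covariance P X Y) /
    (Num.sqrt (fine ('V_P[X])) * Num.sqrt (fine ('V_P[Y]))).

Definition admissible (X Y : T -> R) (g : R -> R) : Prop :=
  [/\ measurable_fun [set: R] g, inL2 (g \o X) & inL2 (g \o Y)].

Definition IC (r : R) (X Y : T -> R) : Prop :=
  [/\ inL2 X, inL2 Y, corr X Y = r &
      forall g : R -> R, admissible X Y g -> corr (g \o X) (g \o Y) = r].

Definition jointdf (X Y : T -> R) (x y : R) : R :=
  fine (P [set t | X t <= x /\ Y t <= y]).
Definition margdf (X : T -> R) (x : R) : R :=
  fine (P [set t | X t <= x]).

Definition quasi_independent (X Y : T -> R) : Prop :=
  forall x y : R,
    (jointdf X Y x y + jointdf X Y y x) / 2 =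
    margdf X x * margdf Y y / 2 + margdf X y * margdf Y x / 2.

End defs.

From Pilot Require Import Defs.
From HB Require Import structures.
From mathcomp Require Import all_boot all_order all_algebra.
From mathcomp Require Import all_classical all_reals all_analysis.
From mathcomp Require Import measurable_realfun lra.
Import Order.TTheory GRing.Theory Num.Theory.
Local Open Scope ring_scope.
Local Open Scope classical_set_scope.

(* (=>) Under IC_0 every g with g(X), g(Y) in L^2 has Cov(g(X), g(Y)) = 0: for
   admissible g this is the correlation condition, and if g(X) or g(Y) is
   degenerate its variance vanishes and Cauchy-Schwarz kills the covariance.
   With A = ]-oo, x] and B = ]-oo, y], applying this to 1_A, 1_B and 1_A + 1_B
   and expanding by bilinearity leaves
   Cov(1_A(X), 1_B(Y)) + Cov(1_B(X), 1_A(Y)) = 0, i.e. quasi-independence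
   at (x, y).
   (<=) Quasi-independence says that the symmetrised joint law
   P_(X,Y) + P_(Y,X) and the symmetrised product law P_X (x) P_Y + P_Y (x) P_X
   agree on quadrants, hence on all Borel sets of R^2.  Integrating
   g(u) g(v) against both gives 2 E[g(X) g(Y)] = 2 E[g(X)] E[g(Y)], so every
   such covariance, hence every correlation, vanishes. *)

Lemma measurable_preimageT {d d'} {T : measurableType d}
    {T' : measurableType d'} {f : T -> T'} {B : set T'} :
  measurable_fun setT f -> measurable B -> measurable (f @^-1` B).
Proof. by move=> mf mB; rewrite -[f @^-1` B]setTI; exact: mf. Qed.

Lemma Lfun_measurable_fun {d} {T : measurableType d} {R : realType}
    {mu : {measure set T -> \bar R}} {p : \bar R} {Z : T -> R} :
  Z \in Lfun mu p -> measurable_fun setT Z.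
Proof. by move=> /sub_Lfun_mfun; rewrite inE. Qed.

Section measure_setX.
Context {d1 d2} {T1 : measurableType d1} {T2 : measurableType d2} {R : realType}.
Variable m : {measure set (T1 * T2) -> \bar R}.

Definition measure_setXl {B : set T2} (_ : measurable B) := fun A => m (A `*` B).
Definition measure_setXr {A : set T1} (_ : measurable A) := fun B => m (A `*` B).

Section left.
Variables (B : set T2) (mB : measurable B).

Let measure_setXl0 : measure_setXl mB set0 = 0%E.
Proof. by rewrite /measure_setXl set0X measure0. Qed.

Let measure_setXl_ge0 A : (0 <= measure_setXl mB A)%E.
Proof. exact: measure_ge0. Qed.

Let measure_setXl_sigma_additive : semi_sigma_additive (measure_setXl mB).
Proof.
move=> F mF tF mUF; rewrite /measure_setXl setX_bigcupl.
apply: measure_semi_sigma_additive => [n||]; first exact: measurableX.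
- apply/trivIsetP => i j _ _ ij.
  by rewrite -setXI (trivIsetP.1 tF i j) ?set0X.
- by apply: bigcupT_measurable => n; exact: measurableX.
Qed.

HB.instance Definition _ := isMeasure.Build _ _ _ (measure_setXl mB)
  measure_setXl0 measure_setXl_ge0 measure_setXl_sigma_additive.
End left.

Section right.
Variables (A : set T1) (mA : measurable A).

Let measure_setXr0 : measure_setXr mA set0 = 0%E.
Proof. by rewrite /measure_setXr setX0 measure0. Qed.

Let measure_setXr_ge0 B : (0 <= measure_setXr mA B)%E.
Proof. exact: measure_ge0. Qed.

Let measure_setXr_sigma_additive : semi_sigma_additive (measure_setXr mA).
Proof.
move=> F mF tF mUF; rewrite /measure_setXr setX_bigcupr.
apply: measure_semi_sigma_additive => [n||]; first exact: measurableX.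
- apply/trivIsetP => i j _ _ ij.
  by rewrite -setXI (trivIsetP.1 tF i j) ?setX0.
- by apply: bigcupT_measurable => n; exact: measurableX.
Qed.

HB.instance Definition _ := isMeasure.Build _ _ _ (measure_setXr mA)
  measure_setXr0 measure_setXr_ge0 measure_setXr_sigma_additive.
End right.

End measure_setX.

Lemma measure_unique_itvNy (R : realType) (m1 m2 : {measure set R -> \bar R}) :
  (forall x, m1 `]-oo, x] = m2 `]-oo, x]) -> (m1 [set: R] < +oo)%E ->
  forall A, measurable A -> m1 A = m2 A.
Proof.
move=> m12 m1oo.
have m1_itv_lty x : (m1 `]-oo, x] < +oo)%E.
  by apply: le_lt_trans m1oo; apply: le_measure; rewrite ?inE.
have := @measure_unique _ R R (@ocitv R) (fun n : nat => `](- n%:R), n%:R]%classic)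
  erefl (@ocitvI R) (fun n => is_ocitv _ _) (bigcup_itvT false false) m1 m2.
apply=> [X /ocitvP[->|[[a b]/= ab ->]]|n].
- by rewrite !measure0.
- have -> : `]a, b]%classic = `]-oo, b] `\` `]-oo, a].
    by rewrite -[RHS]setCK setCD setCitvl setUC -[LHS]setCK setCitv.
  rewrite !measureD ?setIidr //; first by congr (_ - _)%E; apply: m12.
  + by move=> z /=; rewrite !in_itv/= => /le_trans; apply; exact: ltW.
  + by move: (m1_itv_lty b); rewrite m12.
  + exact: m1_itv_lty.
- by apply: le_lt_trans m1oo; apply: le_measure; rewrite ?inE.
Qed.

Lemma measure_unique_quadrant (R : realType)
    (m1 m2 : {measure set (R * R) -> \bar R}) :
  (forall a b, m1 (`]-oo, a] `*` `]-oo, b]) = m2 (`]-oo, a] `*` `]-oo, b])) ->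
  (m1 [set: R * R] < +oo)%E ->
  forall A, measurable A -> m1 A = m2 A.
Proof.
move=> m12 m1oo.
have m1_lty A : measurable A -> (m1 A < +oo)%E.
  by move=> mA; apply: le_lt_trans m1oo; apply: le_measure; rewrite ?inE.
have m12_halfline b A : measurable A ->
    m1 (A `*` `]-oo, b]) = m2 (A `*` `]-oo, b]).
  have mB : measurable (`]-oo, b] : set R) by [].
  apply: (@measure_unique_itvNy _ (measure_setXl m1 mB) (measure_setXl m2 mB)).
    by move=> a; exact: m12.
  by apply: m1_lty; exact: measurableX.
have m12_rect A B : measurable A -> measurable B -> m1 (A `*` B) = m2 (A `*` B).
  move=> mA.
  apply: (@measure_unique_itvNy _ (measure_setXr m1 mA) (measure_setXr m2 mA)).
    by move=> b; exact: m12_halfline.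
  by apply: m1_lty; exact: measurableX.
apply: (measure_unique [set A `*` B | A in measurable & B in measurable]
  (fun _ => setT)) => //.
- exact: measurable_prod_measurableType.
- move=> _ _ [A1 mA1 [B1 mB1 <-]] [A2 mA2 [B2 mB2 <-]].
  rewrite -setXI; exists (A1 `&` A2); first exact: measurableI.
  by exists (B1 `&` B2) => //; exact: measurableI.
- by move=> _; exists setT => //; exists setT => //; rewrite setXTT.
- by rewrite bigcup_const.
- by move=> _ [A mA [B mB <-]]; exact: m12_rect.
Qed.

Section integral_prod_mul.
Context {d1 d2} {T1 : measurableType d1} {T2 : measurableType d2} {R : realType}.
Variables (m1 : {sigma_finite_measure set T1 -> \bar R})
  (m2 : {sigma_finite_measure set T2 -> \bar R}).
Variables (f1 : T1 -> R) (f2 : T2 -> R).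
Hypotheses (mf1 : measurable_fun setT f1) (mf2 : measurable_fun setT f2).
Hypotheses (if1 : m1.-integrable setT (EFin \o f1))
  (if2 : m2.-integrable setT (EFin \o f2)).

Let mf12 : measurable_fun setT (fun z : T1 * T2 => (f1 z.1 * f2 z.2)%:E).
Proof.
apply/measurable_EFinP; apply: measurable_funM.
- exact: measurableT_comp mf1 measurable_fst.
- exact: measurableT_comp mf2 measurable_snd.
Qed.

Lemma integrable_prod_mul :
  (m1 \x m2)%E.-integrable setT (fun z => (f1 z.1 * f2 z.2)%:E).
Proof.
apply/integrable12ltyP => //.
have mabs (T : measurableType _) (f : T -> R) : measurable_fun setT f ->
    measurable_fun setT (fun x => `|f x|%:E).
  by move=> mf; apply/measurable_EFinP; exact: measurableT_comp.
under eq_integral => x _.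
  under eq_integral => y _ do rewrite /= normrM EFinM.
  rewrite ge0_integralZl_EFin //; last exact: mabs.
  over.
rewrite /= ge0_integralZr //; last exact: integral_ge0.
  move/integrableP: if1 => -[_ f1_lty]; move/integrableP: if2 => -[_ f2_lty].
  apply: lte_mul_pinfty => //; first exact: integral_ge0.
  by rewrite ge0_fin_numE //; exact: integral_ge0.
exact: (mabs _ _ _ mf1).
Qed.

Lemma integral_prod_mul : (\int[m1 \x m2]_z (f1 z.1 * f2 z.2)%:E =
  \int[m1]_x (f1 x)%:E * \int[m2]_y (f2 y)%:E)%E.
Proof.
rewrite -integral12_prod_meas1 /fubini_F //=; last exact: integrable_prod_mul.
have f2_fin : (\int[m2]_y (f2 y)%:E)%E \is a fin_num.
  exact: integrable_fin_num.
under eq_integral => x _.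
  under eq_integral => y _ do rewrite EFinM.
  rewrite integralZl // -(fineK f2_fin).
  over.
by rewrite /= integralZr // fineK.
Qed.

End integral_prod_mul.

Section covariance_facts.
Context {d} {T : measurableType d} {R : realType} (P : probability T R).

Lemma bounded_Lfun2 (Z : T -> R) (M : R) :
  measurable_fun setT Z -> (forall t, `|Z t| <= M) -> Z \in Lfun P 2%:E.
Proof.
move=> mZ ZM; rewrite inE/=; apply/andP; split; rewrite inE//=.
rewrite /finite_norm unlock poweR_lty//.
apply: (@le_lt_trans _ _ (\int[P]_t (cst (M ^+ 2)%:E) t))%E.
  apply: ge0_le_integral => //.
  - by move=> t _; rewrite lee_fin powR_ge0.
  - apply/measurable_EFinP.
    apply: (@measurableT_comp _ _ _ _ _ _ (fun x : R => x `^ 2)) => //.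
    exact: measurableT_comp.
  - move=> t _ /=; rewrite lee_fin powR_mulrn //.
    by rewrite lerXn2r ?nnegrE ?(le_trans _ (ZM t)).
rewrite integral_cst // (_ : (P : {measure set T -> \bar R}) setT = 1%E).
  by rewrite mule1 ltry.
exact: probability_setT.
Qed.

Lemma indic_comp_Lfun2 {A : set R} {Z : T -> R} : measurable A ->
  measurable_fun setT Z -> \1_A \o Z \in Lfun P 2%:E.
Proof.
move=> mA mZ; apply: (bounded_Lfun2 _ 1).
  by apply: measurableT_comp mZ; exact: measurable_indic.
by move=> t; rewrite /= indicE; case: (_ \in _); rewrite ?normr0 ?normr1.
Qed.

Lemma Lfun2D {Z1 Z2 : T -> R} :
  Z1 \in Lfun P 2%:E -> Z2 \in Lfun P 2%:E -> Z1 \+ Z2 \in Lfun P 2%:E.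
Proof. by move=> Z12 Z22; apply: rpredD; rewrite ?lee_fin ?ler1n. Qed.

Lemma expectation_ae_cst {Z : T -> R} {S : set T} {c : R} :
  measurable_fun setT Z -> measurable S -> P S = 1%E ->
  (forall t, S t -> Z t = c) -> ('E_P[Z] = c%:E)%E.
Proof.
move=> mZ mS PS1 ZS; rewrite unlock (ae_eq_integral (cst c%:E)) //.
- rewrite integral_cst // (_ : (P : {measure set T -> \bar R}) setT = 1%E).
    by rewrite mule1.
  exact: probability_setT.
- exact/measurable_EFinP.
- exists (~` S); split; first exact: measurableC.
    by apply: eq_trans (probability_setC P mS) _; rewrite PS1 subee.
  by move=> t /= nZSt St; apply: nZSt => _; rewrite ZS.
Qed.

Lemma variance_ae_cst (Z : T -> R) (c : R) : Z \in Lfun P 2%:E ->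
  P [set t | Z t = c] = 1%E -> ('V_P[Z] = 0)%E.
Proof.
move=> Z2 Zc1; have mZ := Lfun_measurable_fun Z2.
have mZc : measurable [set t | Z t = c].
  exact: measurable_preimageT mZ (measurable_set1 c).
have EZ : ('E_P[Z] = c%:E)%E := expectation_ae_cst mZ mZc Zc1 (fun _ => id).
rewrite /variance covariance.unlock EZ /=.
apply: (expectation_ae_cst _ mZc Zc1) => [|t /= Zt].
  by apply: measurable_funM; exact: measurable_funB.
by change ((Z t - c) * (Z t - c) = 0); rewrite Zt subrr mul0r.
Qed.

Lemma covariance_var0l (Z1 Z2 : T -> R) : Z1 \in Lfun P 2%:E ->
  Z2 \in Lfun P 2%:E -> ('V_P[Z1] = 0)%E -> covariance P Z1 Z2 = 0%E.
Proof.
move=> Z12 Z22 V0.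
have Pfin : P setT \is a fin_num := fin_num_measure P _ measurableT.
apply/eqP; rewrite eq_le; apply/andP; split.
  by rewrite (le_trans (covariance_le Z12 Z22)) // V0 sqrte0 mul0e.
rewrite -oppe_le0 -covarianceNl ?Lfun2_mul_Lfun1 // ?Lfun_subset12 //.
apply: le_trans (covariance_le _ Z22) _; first by rewrite rpredN.
by rewrite varianceN // V0 sqrte0 mul0e.
Qed.

Lemma covariance_degeneratel (Z1 Z2 : T -> R) : Z1 \in Lfun P 2%:E ->
  Z2 \in Lfun P 2%:E -> ~ Defs.nondegenerate P Z1 -> covariance P Z1 Z2 = 0%E.
Proof.
move=> Z12 Z22 /contrapT[c Z1c]; apply: covariance_var0l => //.
exact: variance_ae_cst Z1c.
Qed.

(* A vanishing variance makes [corr] zero through the junk value x / 0 = 0;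
   Cauchy-Schwarz then makes the covariance vanish as well. *)
Lemma corr_eq0 {Z1 Z2 : T -> R} : Z1 \in Lfun P 2%:E -> Z2 \in Lfun P 2%:E ->
  corr P Z1 Z2 = 0 <-> covariance P Z1 Z2 = 0%E.
Proof.
move=> Z12 Z22; split => [|cov0]; last by rewrite /corr cov0 mul0r.
have Pfin : P setT \is a fin_num := fin_num_measure P _ measurableT.
have var0 W : W \in Lfun P 2%:E -> fine 'V_P[W] <= 0 -> ('V_P[W] = 0)%E.
  move=> W2 VW; rewrite -(fineK (variance_fin_num W2)).
  by congr EFin; apply/eqP; rewrite eq_le VW fine_ge0 // variance_ge0.
rewrite /corr => /eqP; rewrite mulf_eq0 invr_eq0 mulf_eq0 !sqrtr_eq0.
case/or3P => [/eqP cov0|/(var0 _ Z12) V0|/(var0 _ Z22) V0].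
- rewrite -(fineK (covariance_fin_num _ _ (Lfun2_mul_Lfun1 Z12 Z22))) ?cov0 //.
  + exact: Lfun_subset12.
  + exact: Lfun_subset12.
- exact: covariance_var0l.
- by rewrite covarianceC; exact: covariance_var0l.
Qed.

Lemma covariance_indic_comp (A B : set R) (Z1 Z2 : T -> R) :
  measurable A -> measurable B ->
  measurable_fun setT Z1 -> measurable_fun setT Z2 ->
  covariance P (\1_A \o Z1) (\1_B \o Z2) =
  (P (Z1 @^-1` A `&` Z2 @^-1` B) - P (Z1 @^-1` A) * P (Z2 @^-1` B))%E.
Proof.
move=> mA mB mZ1 mZ2.
have Pfin : P setT \is a fin_num := fin_num_measure P _ measurableT.
have mZ1A := measurable_preimageT mZ1 mA.
have mZ2B := measurable_preimageT mZ2 mB.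
change (covariance P (\1_(Z1 @^-1` A)) (\1_(Z2 @^-1` B)) =
  (P (Z1 @^-1` A `&` Z2 @^-1` B) - P (Z1 @^-1` A) * P (Z2 @^-1` B))%E).
have AZ1 : \1_(Z1 @^-1` A) \in Lfun P 2%:E := indic_comp_Lfun2 mA mZ1.
have BZ2 : \1_(Z2 @^-1` B) \in Lfun P 2%:E := indic_comp_Lfun2 mB mZ2.
rewrite covarianceE ?Lfun2_mul_Lfun1 // ?Lfun_subset12 //.
have -> : \1_(Z1 @^-1` A) * \1_(Z2 @^-1` B) =
          \1_(Z1 @^-1` A `&` Z2 @^-1` B) :> (T -> R) by rewrite indicI.
by rewrite !expectation_indic //; exact: measurableI.
Qed.

End covariance_facts.

Section quasi_independence.
Context {d} {T : measurableType d} {R : realType} (P : probability T R).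

Definition comp_uncorrelated (X Y : T -> R) : Prop :=
  forall g : R -> R, measurable_fun setT g ->
    g \o X \in Lfun P 2%:E -> g \o Y \in Lfun P 2%:E ->
    covariance P (g \o X) (g \o Y) = 0%E.

Definition sym_quadrant_factorization (X Y : T -> R) : Prop := forall a b : R,
  (P (X @^-1` `]-oo, a] `&` Y @^-1` `]-oo, b]) +
   P (X @^-1` `]-oo, b] `&` Y @^-1` `]-oo, a]) =
   P (X @^-1` `]-oo, a]) * P (Y @^-1` `]-oo, b]) +
   P (X @^-1` `]-oo, b]) * P (Y @^-1` `]-oo, a]))%E.

Lemma IC0P {X Y : T -> R} : inL2 P X -> inL2 P Y ->
  IC P 0 X Y <-> comp_uncorrelated X Y.
Proof.
move=> hX hY; have [[X2 _] [Y2 _]] := (hX, hY).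
split => [[_ _ _ corr_g0] g mg gX gY|cov0].
  have [gX_nd|/covariance_degeneratel] := pselect (Defs.nondegenerate P (g \o X));
    last exact.
  have [gY_nd|/covariance_degeneratel gY0] :=
    pselect (Defs.nondegenerate P (g \o Y)).
    by apply/(corr_eq0 P gX gY); exact: corr_g0.
  by rewrite covarianceC gY0.
split => //.
  exact/(corr_eq0 P X2 Y2)/(cov0 idfun (@measurable_id _ _ setT) X2 Y2).
by move=> g [mg [gX _] [gY _]]; apply/(corr_eq0 P gX gY); exact: cov0.
Qed.

Lemma quasi_independentP {X Y : T -> R} :
  measurable_fun setT X -> measurable_fun setT Y ->
  quasi_independent P X Y <-> sym_quadrant_factorization X Y.
Proof.
move=> mX mY.
have mpre (Z : T -> R) (a : R) :
    measurable_fun setT Z -> measurable (Z @^-1` `]-oo, a]).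
  by move=> mZ; exact: measurable_preimageT.
have PE S : measurable S -> P S = (fine (P S))%:E.
  by move=> mS; rewrite fineK // fin_num_measure.
have jointE a b :
    jointdf P X Y a b = fine (P (X @^-1` `]-oo, a] `&` Y @^-1` `]-oo, b])).
  by rewrite /jointdf !preimage_itvNyc.
have margE (Z : T -> R) a : margdf P Z a = fine (P (Z @^-1` `]-oo, a])).
  by rewrite /margdf preimage_itvNyc.
split=> qi a b; move: (qi a b); rewrite !jointE !margE.
all: rewrite (PE _ (measurableI _ _ (mpre X a mX) (mpre Y b mY))).
all: rewrite (PE _ (measurableI _ _ (mpre X b mX) (mpre Y a mY))).
all: rewrite (PE _ (mpre X a mX)) (PE _ (mpre X b mX)).
all: rewrite (PE _ (mpre Y a mY)) (PE _ (mpre Y b mY)) -!EFinM -!EFinD.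
- by move=> e; congr EFin; lra.
- by case; lra.
Qed.

Lemma comp_uncorrelated_sym_quadrant (X Y : T -> R) :
  measurable_fun setT X -> measurable_fun setT Y ->
  comp_uncorrelated X Y -> sym_quadrant_factorization X Y.
Proof.
move=> mX mY cov0 a b.
pose A : set R := `]-oo, a]; pose B : set R := `]-oo, b].
have mA : measurable A by exact: measurable_itv.
have mB : measurable B by exact: measurable_itv.
have miA : measurable_fun setT (\1_A : R -> R) by exact: measurable_indic.
have miB : measurable_fun setT (\1_B : R -> R) by exact: measurable_indic.
have AX := indic_comp_Lfun2 P mA mX; have BX := indic_comp_Lfun2 P mB mX.
have AY := indic_comp_Lfun2 P mA mY; have BY := indic_comp_Lfun2 P mB mY.
have cov_sum : (covariance P (\1_A \o X) (\1_B \o Y) +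
    covariance P (\1_B \o X) (\1_A \o Y) = 0)%E.
  have : covariance P ((\1_A \o X) \+ (\1_B \o X))
                      ((\1_A \o Y) \+ (\1_B \o Y)) = 0%E.
    exact: cov0 (\1_A \+ \1_B) (measurable_funD miA miB)
      (Lfun2D P AX BX) (Lfun2D P AY BY).
  rewrite covarianceDl ?Lfun2D // !(covarianceDr _ AY BY) //.
  by rewrite (cov0 _ miA) // (cov0 _ miB) // add0e adde0.
move: cov_sum; rewrite !covariance_indic_comp //.
have [mXA mXB] := (measurable_preimageT mX mA, measurable_preimageT mX mB).
have [mYA mYB] := (measurable_preimageT mY mA, measurable_preimageT mY mB).
move/eqP; rewrite addeACA -oppeD ?sube_eq ?add0e => [/eqP //|||].
- by rewrite fin_numD !fin_num_measure //; exact: measurableI.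
- by rewrite fin_num_adde_defr // fin_numD !fin_numM // !fin_num_measure.
- by rewrite fin_num_adde_defr // fin_numM // !fin_num_measure.
Qed.

End quasi_independence.

Section symmetrized_laws.
Context {d} {T : measurableType d} {R : realType} (P : probability T R).
Variables (X Y : T -> R) (mX : measurable_fun setT X) (mY : measurable_fun setT Y).
Hypothesis XY_qi : sym_quadrant_factorization P X Y.

Let PX := distribution P (mfun_Sub (mem_set mX)).
Let PY := distribution P (mfun_Sub (mem_set mY)).
Let PXY := distribution P (mfun_Sub (mem_set (measurable_fun_pair mX mY))).
Let PYX := distribution P (mfun_Sub (mem_set (measurable_fun_pair mY mX))).

Lemma sym_joint_law_eq A : measurable A ->
  measure_add PXY PYX A = measure_add (PX \x PY)%E (PY \x PX)%E A.
Proof.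
apply: measure_unique_quadrant => [a b|].
  pose Q := `]-oo, a] `*` `]-oo, b].
  transitivity (PXY Q + PYX Q)%E; first exact: measure_addE.
  transitivity ((PX \x PY)%E Q + (PY \x PX)%E Q)%E; last exact/esym/measure_addE.
  rewrite !product_measure1E // [(PY _ * _)%E]muleC.
  have -> : PYX Q = P (X @^-1` `]-oo, b] `&` Y @^-1` `]-oo, a]).
    by rewrite setIC.
  exact: XY_qi.
rewrite (_ : _ [set: R * R] = PXY setT + PYX setT)%E; last exact: measure_addE.
have [-> ->] : PXY setT = 1%E /\ PYX setT = 1%E by split; exact: probability_setT.
by rewrite -EFinD ltry.
Qed.

Section comp.
Variable g : R -> R.
Hypotheses (mg : measurable_fun setT g)
  (gX : g \o X \in Lfun P 2%:E) (gY : g \o Y \in Lfun P 2%:E).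

Let Pfin : P setT \is a fin_num := fin_num_measure P _ measurableT.
Let f z := (g z.1 * g z.2)%:E.

Let mf : measurable_fun setT f.
Proof.
apply/measurable_EFinP; apply: measurable_funM.
- exact: measurableT_comp mg measurable_fst.
- exact: measurableT_comp mg measurable_snd.
Qed.

Let mEg : measurable_fun setT (EFin \o g).
Proof. exact/measurable_EFinP. Qed.

Let integrable_comp {Z : T -> R} : g \o Z \in Lfun P 2%:E ->
  P.-integrable setT (EFin \o (g \o Z)).
Proof. by move=> gZ; apply/Lfun1_integrable; exact: Lfun_subset12. Qed.

Let integrable_comp_mul {Z1 Z2 : T -> R} :
  g \o Z1 \in Lfun P 2%:E -> g \o Z2 \in Lfun P 2%:E ->
  P.-integrable setT (EFin \o ((g \o Z1) \* (g \o Z2))).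
Proof. by move=> gZ1 gZ2; apply/Lfun1_integrable; exact: Lfun2_mul_Lfun1. Qed.

Lemma integral_sym_joint_law : (\int[measure_add PXY PYX]_z f z =
  'E_P[(g \o X) * (g \o Y)] + 'E_P[(g \o Y) * (g \o X)])%E.
Proof.
have [iXY iYX] := (integrable_comp_mul gX gY, integrable_comp_mul gY gX).
rewrite integral_measure_add //; try exact: integrable_pushforward.
by rewrite !integral_distribution // !unlock.
Qed.

Lemma integral_sym_product_law :
  (\int[measure_add (PX \x PY) (PY \x PX)]_z f z =
   'E_P[g \o X] * 'E_P[g \o Y] + 'E_P[g \o Y] * 'E_P[g \o X])%E.
Proof.
have [iX iY] := (integrable_comp gX, integrable_comp gY).
have iPX : PX.-integrable setT (EFin \o g) by exact: integrable_pushforward.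
have iPY : PY.-integrable setT (EFin \o g) by exact: integrable_pushforward.
rewrite integral_measure_add //; try exact: integrable_prod_mul.
by rewrite !integral_prod_mul // !integral_distribution // !unlock.
Qed.

Lemma expectation_comp_mulE :
  ('E_P[(g \o X) * (g \o Y)] = 'E_P[g \o X] * 'E_P[g \o Y])%E.
Proof.
have int_eq : (\int[measure_add PXY PYX]_z f z =
               \int[measure_add (PX \x PY) (PY \x PX)]_z f z)%E.
  by apply: eq_measure_integral => A mA _; exact: sym_joint_law_eq.
have := etrans (esym integral_sym_joint_law)
  (etrans int_eq integral_sym_product_law).
rewrite [(g \o Y) * _]mulrC [X in (_ = _ + X)%E]muleC.
have EgXY_fin : ('E_P[(g \o X) * (g \o Y)])%E \is a fin_num.
  by apply: expectation_fin_num; exact: Lfun2_mul_Lfun1.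
have EgXEgY_fin : ('E_P[g \o X] * 'E_P[g \o Y])%E \is a fin_num.
  by rewrite fin_numM // expectation_fin_num // Lfun_subset12.
rewrite -(fineK EgXY_fin) -(fineK EgXEgY_fin) -!EFinD => -[sum_eq].
by congr EFin; lra.
Qed.

End comp.

Lemma sym_quadrant_comp_uncorrelated : comp_uncorrelated P X Y.
Proof.
move=> g mg gX gY; have Pfin : P setT \is a fin_num := fin_num_measure P _ measurableT.
rewrite covarianceE ?Lfun2_mul_Lfun1 ?Lfun_subset12 // expectation_comp_mulE //.
by rewrite subee // fin_numM // expectation_fin_num // Lfun_subset12.
Qed.

End symmetrized_laws.

Theorem theorem1 (d : measure_display) (T : measurableType d) (R : realType)
  (P : probability T R) (hP : atomless P) (X Y : T -> R) :
  inL2 P X -> inL2 P Y -> (IC P 0 X Y <-> quasi_independent P X Y).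
Proof.
move=> hX hY.
have [mX mY] := (Lfun_measurable_fun hX.1, Lfun_measurable_fun hY.1).
rewrite (quasi_independentP P mX mY) (IC0P P hX hY).
split; first exact: comp_uncorrelated_sym_quadrant.
exact: sym_quadrant_comp_uncorrelated.
Qed.
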